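(* Let $P\subset\mathbf H^2$ be a convex polygon and let $\tau:S\to S$ be the homeomorphism of the circle at infinity $S$ induced by the outer billiard map about $P$. Then $\tau$ is not periodic, i.e. there is no $N\ge1$ with $\tau^N=\mathrm{id}_S$.
   Context: Outer billiard in $\mathbf H^2$: $X=\mathbf H^2\setminus P$ is partitioned by the geodesic rays extending the sides of $P$ (the ray extending side $ab$ beyond $a$, vertices counterclockwise) into regions $X_a$ indexed by vertices ($X_a$ = points $x$ for which the geodesic through $x$ and $a$ supports $P$ with $P$ on a fixed side), and the map $T$ is the geodesic symmetry about $a$ on $X_a$. This map extends continuously to a homeomorphism $\tau$ of the circle at infinity. *)

(* Hyperbolic plane H^2 in the Beltrami-Klein (projective) model:
   H^2 = open unit disk of R^2, geodesics = open chords, circle at infinity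
   S = unit circle. *)
From HB Require Import structures.
From mathcomp Require Import all_boot all_order all_algebra.
From mathcomp Require Import reals.
Set Implicit Arguments. Unset Strict Implicit. Unset Printing Implicit Defensive.
Import Order.TTheory GRing.Theory Num.Theory.
Local Open Scope ring_scope.

Section Billiard.
Variable R : realType.
Definition pt := (R * R)%type.

Definition dot (p q : pt) : R := p.1 * q.1 + p.2 * q.2.
Definition vsub (p q : pt) : pt := (p.1 - q.1, p.2 - q.2).
Definition vscale (k : R) (p : pt) : pt := (k * p.1, k * p.2).

(* orientation: > 0 iff c is strictly to the left of the directed line a->b *)
Definition orient (a b c : pt) : R :=
  (b.1 - a.1) * (c.2 - a.2) - (b.2 - a.2) * (c.1 - a.1).

Definition in_H2 (p : pt) : bool := dot p p < 1.
Definition on_S (p : pt) : bool := dot p p == 1.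

Definition convex_polygon (n : nat) (v : 'I_n -> pt) : Prop :=
  (3 <= n)%N /\ (forall i, in_H2 (v i)) /\
  (forall i j : 'I_n, j != i -> j != ordS i -> 0 < orient (v i) (v (ordS i)) (v j)).

(* The geodesic through the ideal point xi and the vertex a supports P with P
   on the (fixed) left side of the oriented geodesic from xi through a.
   (By linearity of orient in its last argument this is the same as requiring
   it for all points of the convex hull P.) *)
Definition supports (n : nat) (v : 'I_n -> pt) (xi : pt) (i : 'I_n) : bool :=
  [forall j, 0 <= orient xi (v i) (v j)].

(* other ideal endpoint of the geodesic (chord) through xi in S and a in H^2;
   this is the image of xi under the geodesic symmetry about a. *)
Definition chord_other (xi a : pt) : pt :=
  let d := vsub a xi in
  vsub xi (vscale (2 * dot xi d / dot d d) d).

(* tau : S -> S, the continuous extension to the circle at infinity of the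
   outer billiard map T: on the (closed) arc of S bounding X_a, tau is the
   geodesic symmetry about a.  At arc endpoints the two possible vertices lie
   on the same geodesic through xi, so the value does not depend on the
   choice. *)
Definition tau (n : nat) (v : 'I_n -> pt) (xi : pt) : pt :=
  if [pick i | supports v xi i] is Some i then chord_other xi (v i) else xi.

End Billiard.

From HB Require Import structures.
From mathcomp Require Import all_boot all_order all_algebra.
From mathcomp Require Import reals.
From mathcomp Require Import ring lra.
From mathcomp Require Import classical_sets topology normedtype.
Set Implicit Arguments. Unset Strict Implicit. Unset Printing Implicit Defensive.
Import Order.TTheory GRing.Theory Num.Theory.
Local Open Scope ring_scope.
Local Open Scope classical_set_scope.

(* Near a point y of the circle at infinity, use the Cayley coordinate t of [chart y t].
   In these coordinates the reflection of S through an interior point a is a Moebius map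
   t |-> A t / (1 + G t) with A = (1 - |a|^2) / |a - y|^2, the [stretch] of a at y.
   On either side of a point p of S, tau is the reflection through a fixed vertex, so
   tau^N is, on either side of p, a Moebius map whose derivative at p is the product of
   the stretches along the orbit of p, taken with the vertices used on that side. If
   tau^N = id, both one-sided derivatives are 1. But let p be the ideal endpoint of the
   geodesic extending a side [v i, v j] beyond v i. On the two sides of p, tau reflects
   through v j and v i. Along a supporting geodesic the stretch increases strictly
   towards p, so the first factors of the two products differ strictly, and at the other
   points of the orbit the same comparison holds weakly. *)

Section PlaneAlgebra.
Variable R : realType.
Implicit Types (p q y z w a c : pt R) (s t A G : R).

Definition cross p q : R := p.1 * q.2 - p.2 * q.1.
Definition cmul y z : pt R := (y.1 * z.1 - y.2 * z.2, y.1 * z.2 + y.2 * z.1).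
Definition conjp y : pt R := (y.1, - y.2).
Definition cayley t : pt R := ((1 - t ^+ 2) / (1 + t ^+ 2), 2 * t / (1 + t ^+ 2)).
Definition chart y t : pt R := cmul y (cayley t).
Definition mobius A G s : R := A * s / (1 + G * s).

Lemma dot_ge0 p : 0 <= dot p p.
Proof. by rewrite addr_ge0 // -expr2 sqr_ge0. Qed.

Lemma dot_vsub_gt0 p q : p != q -> 0 < dot (vsub p q) (vsub p q).
Proof.
move=> pq; rewrite lt_def dot_ge0 andbT; apply: contra pq.
rewrite /dot paddr_eq0 -?expr2 ?sqr_ge0 // !sqrf_eq0 !subr_eq0 => /andP[/eqP e1 /eqP e2].
by rewrite [p]surjective_pairing [q]surjective_pairing e1 e2.
Qed.

Lemma lt_dot_neq p q : dot p p < dot q q -> p != q.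
Proof. by apply: contraTneq => ->; rewrite ltxx. Qed.

Lemma sqrD1_gt0 t : 0 < 1 + t ^+ 2.
Proof. by rewrite ltr_pwDl // sqr_ge0. Qed.

Lemma dot_cmul y z w : dot (cmul y z) (cmul y w) = dot y y * dot z w.
Proof. by rewrite /dot /cmul /=; ring. Qed.

Lemma cross_cmul y z w : cross (cmul y z) (cmul y w) = dot y y * cross z w.
Proof. by rewrite /cross /cmul /dot /=; ring. Qed.

Lemma vsub_cmul y a z : vsub (cmul y a) (cmul y z) = cmul y (vsub a z).
Proof. by rewrite /vsub /cmul /=; congr (_, _); ring. Qed.

Lemma cmulA y z w : cmul y (cmul z w) = cmul (cmul y z) w.
Proof. by rewrite /cmul /=; congr (_, _); ring. Qed.

Lemma cmul1 y : cmul y (1, 0) = y.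
Proof. by case: y => a b; rewrite /cmul /=; congr (_, _); ring. Qed.

Lemma cmul_conjp y : on_S y -> cmul y (conjp y) = (1, 0).
Proof.
move=> /eqP hy; rewrite /cmul /conjp /=; congr (_, _); last by ring.
by rewrite -hy /dot; ring.
Qed.

Lemma cmulC y z : cmul y z = cmul z y.
Proof. by rewrite /cmul; congr (_, _); ring. Qed.

Lemma cmulK y z : on_S y -> cmul (conjp y) (cmul y z) = z.
Proof. by move=> hy; rewrite cmulA [cmul _ y]cmulC cmul_conjp // cmulC cmul1. Qed.

Lemma cmulKV y z : on_S y -> cmul y (cmul (conjp y) z) = z.
Proof. by move=> hy; rewrite cmulA cmul_conjp // cmulC cmul1. Qed.

Lemma on_S_cmul y z : on_S y -> on_S z -> on_S (cmul y z).
Proof. by rewrite /on_S dot_cmul => /eqP-> /eqP->; rewrite mulr1. Qed.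

Lemma on_S_cayley t : on_S (cayley t).
Proof.
apply/eqP; rewrite /dot /cayley /=.
by field; rewrite lt0r_neq0 // sqrD1_gt0.
Qed.

Lemma on_S_chart y t : on_S y -> on_S (chart y t).
Proof. by move=> hy; apply: on_S_cmul => //; apply: on_S_cayley. Qed.

Lemma cayleyK t : (cayley t).2 / (1 + (cayley t).1) = t.
Proof.
have h := lt0r_neq0 (sqrD1_gt0 t).
have -> : 1 + (cayley t).1 = 2 / (1 + t ^+ 2) by rewrite /cayley /=; field.
by rewrite /cayley /=; field.
Qed.

Lemma chart_inj y t t' : on_S y -> chart y t = chart y t' -> t = t'.
Proof.
by move=> hy /(congr1 (cmul (conjp y))); rewrite !cmulK // => e; rewrite -[t]cayleyK e cayleyK.
Qed.

Lemma mobius_den_comp A1 G1 G2 s : 1 + G1 * s != 0 ->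
  (1 + G1 * s) * (1 + G2 * mobius A1 G1 s) = 1 + (G1 + G2 * A1) * s.
Proof. by move=> h; rewrite /mobius; field. Qed.

Lemma mobius_comp A1 G1 A2 G2 s : 1 + G1 * s != 0 -> 1 + G2 * mobius A1 G1 s != 0 ->
  mobius A2 G2 (mobius A1 G1 s) = mobius (A2 * A1) (G1 + G2 * A1) s.
Proof.
move=> h1 h2; have := mulf_neq0 h1 h2; rewrite mobius_den_comp // => h3.
by rewrite /mobius; field; rewrite h3.
Qed.

Lemma mobius_signr (b : bool) A G s :
  mobius A G ((-1) ^+ b * s) = (-1) ^+ b * mobius A ((-1) ^+ b * G) s.
Proof. by rewrite /mobius mulrCA !mulrA [G * _]mulrC. Qed.

End PlaneAlgebra.

Section Chords.
Variable R : realType.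
Implicit Types (x y z a : pt R) (t : R).

Definition stretch a y : R := (1 - dot a a) / dot (vsub a y) (vsub a y).
Definition bend y a : R := - (2 * cross y a) / dot (vsub a y) (vsub a y).

Lemma dot_vsub_S_gt0 x a : on_S x -> in_H2 a -> 0 < dot (vsub a x) (vsub a x).
Proof. by move=> /eqP hx ha; apply/dot_vsub_gt0/lt_dot_neq; rewrite hx. Qed.

Lemma chord_other_on_S x a : on_S x -> in_H2 a -> on_S (chord_other x a).
Proof.
move=> hx ha; have hd := lt0r_neq0 (dot_vsub_S_gt0 hx ha).
move: hx hd; rewrite /on_S /chord_other /dot /vsub /vscale /= => /eqP hx hd.
by apply/eqP; rewrite -[RHS]hx; field.
Qed.

Lemma chord_other_cmul y z a : on_S y ->
  chord_other (cmul y z) (cmul y a) = cmul y (chord_other z a).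
Proof.
move=> /eqP hy; rewrite /chord_other vsub_cmul !dot_cmul hy !mul1r.
by rewrite /vsub /vscale /cmul /=; congr (_, _); ring.
Qed.

Lemma stretch_cmul y a z : on_S y -> stretch (cmul y a) (cmul y z) = stretch a z.
Proof. by move=> /eqP hy; rewrite /stretch vsub_cmul !dot_cmul hy !mul1r. Qed.

Lemma bend_cmul y z a : on_S y -> bend (cmul y z) (cmul y a) = bend z a.
Proof. by move=> /eqP hy; rewrite /bend vsub_cmul cross_cmul !dot_cmul hy !mul1r. Qed.

Lemma chord_other_cayley a t : in_H2 a -> 1 + bend (1, 0) a * t != 0 ->
  chord_other (cayley t) a =
  chart (chord_other (1, 0) a) (mobius (stretch a (1, 0)) (bend (1, 0) a) t).
Proof.
move=> ha hb.
have h10 : on_S (1, 0 : R) by rewrite /on_S /dot /= mulr1 mulr0 addr0.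
have hD := lt0r_neq0 (dot_vsub_S_gt0 h10 ha).
have hC := lt0r_neq0 (dot_vsub_S_gt0 (on_S_cayley t) ha).
have ht := lt0r_neq0 (sqrD1_gt0 t).
have sqrD_neq0 (x u : R) : x != 0 -> x ^+ 2 + u ^+ 2 != 0.
  move=> hx; have hx2 : 0 < x ^+ 2 by rewrite lt_def sqrf_eq0 hx sqr_ge0.
  by rewrite lt0r_neq0 // ltr_pwDl // sqr_ge0.
move: hb hD hC; case: a ha => p q _.
rewrite /bend /stretch /chord_other /chart /cmul /cayley /mobius /cross /vsub /vscale /dot /=.
rewrite !subr0 mul1r mul0r subr0 => hb hD hC.
have hb' : (p - 1) * (p - 1) + q * q + - (2 * q) * t != 0.
  move: hb hD; set D := (p - 1) * (p - 1) + q * q => hb hD.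
  have -> : D + - (2 * q) * t = (1 + - (2 * q) / D * t) * D by field.
  by rewrite mulf_neq0.
have hC' : (p * (1 + t ^+ 2) - (1 - t ^+ 2)) * (p * (1 + t ^+ 2) - (1 - t ^+ 2)) +
      (q * (1 + t ^+ 2) - 2 * t) * (q * (1 + t ^+ 2) - 2 * t) != 0.
  set C := (X in X != 0) in hC.
  have -> : (p * (1 + t ^+ 2) - (1 - t ^+ 2)) * (p * (1 + t ^+ 2) - (1 - t ^+ 2)) +
      (q * (1 + t ^+ 2) - 2 * t) * (q * (1 + t ^+ 2) - 2 * t) = (1 + t ^+ 2) ^+ 2 * C.
    by rewrite /C; field.
  by rewrite mulf_neq0 // expf_neq0.
by congr (_, _); field; rewrite hD hb' sqrD_neq0 // ht hC'.
Qed.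

Lemma on_S_conjp y : on_S y -> on_S (conjp y).
Proof. by rewrite /on_S /dot /= mulrNN. Qed.

Lemma chord_other_chart y a t : on_S y -> in_H2 a -> 1 + bend y a * t != 0 ->
  chord_other (chart y t) a = chart (chord_other y a) (mobius (stretch a y) (bend y a) t).
Proof.
move=> hy ha hb; set a' := cmul (conjp y) a.
have ea : cmul y a' = a by rewrite cmulKV.
have ha' : in_H2 a' by rewrite /in_H2 dot_cmul (eqP (on_S_conjp hy)) mul1r.
have -> : stretch a y = stretch a' (1, 0) by rewrite -(stretch_cmul a' (1, 0) hy) cmul1 ea.
have eb : bend y a = bend (1, 0) a' by rewrite -(bend_cmul (1, 0) a' hy) cmul1 ea.
rewrite eb in hb *.
rewrite -{1}ea /chart chord_other_cmul // chord_other_cayley // /chart cmulA.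
by rewrite -chord_other_cmul // cmul1 ea.
Qed.

End Chords.

Section NearRight0.
Variable R : realType.
Implicit Types (s t A G : R).

Lemma near_right0P (P : R -> Prop) :
  (\forall s \near 0^'+, P s) <-> exists2 d : R, 0 < d & forall s, 0 < s -> s < d -> P s.
Proof.
split=> [|[d d0 H]].
  rewrite /at_right near_withinE => -[d /= d0 H].
  exists d => // s s0 sd; apply: H => //.
  by rewrite /ball /= sub0r normrN gtr0_norm.
near=> s; apply: H; near: s; [exact: nbhs_right_gt | exact: nbhs_right_lt].
Unshelve. all: by end_near. Qed.

Lemma near_right0_comp (f : R -> R) (P : R -> Prop) :
    (forall e, 0 < e -> \forall s \near 0^'+, 0 < f s < e) ->
  (\forall t \near 0^'+, P t) -> \forall s \near 0^'+, P (f s).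
Proof.
move=> hf /near_right0P [d d0 hP]; near=> s.
have /andP[fs_gt0 fs_lt] : 0 < f s < d by near: s; exact: hf.
exact: hP.
Unshelve. all: by end_near. Qed.

Lemma near_right0_poly_gt0 (c0 c1 c2 : R) : 0 < c0 \/ (c0 = 0 /\ 0 < c1) ->
  \forall s \near 0^'+, 0 < c0 + c1 * s + c2 * s ^+ 2.
Proof.
have const_gt0 (d0 d1 d2 : R) : 0 < d0 -> \forall s \near 0^'+, 0 < d0 + d1 * s + d2 * s ^+ 2.
  move=> d0_gt0; have K_gt0 : 0 < `|d1| + `|d2| + 1 by rewrite ltr_wpDl // addr_ge0.
  near=> s.
  have s_gt0 : 0 < s by near: s; exact: nbhs_right_gt.
  have s_lt1 : s < 1 by near: s; exact: nbhs_right_lt.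
  have sK : s * (`|d1| + `|d2| + 1) < d0.
    by rewrite -ltr_pdivlMr //; near: s; apply: nbhs_right_lt; rewrite divr_gt0.
  have l1 : - `|d1| <= d1 := lerNnormlW (lexx _).
  have l2 : - `|d2| <= d2 := lerNnormlW (lexx _).
  have h1 : 0 <= (d1 + `|d1|) * s by apply: mulr_ge0; [lra | exact: ltW].
  have h2 : 0 <= (d2 + `|d2|) * s ^+ 2 by apply: mulr_ge0; [lra | exact: sqr_ge0].
  have h3 : 0 <= `|d2| * (s * (1 - s)) by rewrite !mulr_ge0 // ?subr_ge0 ltW.
  nra.
case=> [|[-> c1_gt0]]; first exact: const_gt0.
near=> s.
have s_gt0 : 0 < s by near: s; exact: nbhs_right_gt.
have -> : 0 + c1 * s + c2 * s ^+ 2 = s * (c1 + c2 * s + 0 * s ^+ 2) by ring.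
by rewrite mulr_gt0 //; near: s; exact: const_gt0.
Unshelve. all: by end_near. Qed.

Lemma near_right0_den_gt0 G : \forall s \near 0^'+, 1 / 2 < 1 + G * s.
Proof.
have half : 0 < 1 / 2 :> R by rewrite divr_gt0.
near=> s.
have : 0 < 1 / 2 + G * s + 0 * s ^+ 2 by near: s; exact: near_right0_poly_gt0 (or_introl half).
by rewrite mul0r addr0; lra.
Unshelve. all: by end_near. Qed.

Lemma near_right0_mobius A G e : 0 < A -> 0 < e ->
  \forall s \near 0^'+, 0 < mobius A G s < e.
Proof.
move=> A_gt0 e_gt0; near=> s.
have s_gt0 : 0 < s by near: s; exact: nbhs_right_gt.
have den : 1 / 2 < 1 + G * s by near: s; exact: near_right0_den_gt0.
have sA : s * (2 * A) < e.
  by rewrite -ltr_pdivlMr ?mulr_gt0 //; near: s; apply: nbhs_right_lt; rewrite divr_gt0 ?mulr_gt0.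
have den_gt0 : 0 < 1 + G * s by lra.
rewrite /mobius divr_gt0 ?mulr_gt0 //= ltr_pdivrMr //.
nra.
Unshelve. all: by end_near. Qed.

Lemma mobius_id A G : (\forall s \near 0^'+, mobius A G s = s) -> A = 1.
Proof.
move=> /near_right0P [d d_gt0 hd].
have lin s : 0 < s -> s < d -> A = 1 + G * s.
  move=> s_gt0 s_lt; have := hd s s_gt0 s_lt; rewrite /mobius.
  have [->|den] := eqVneq (1 + G * s) 0; first by rewrite invr0 mulr0 => /esym/eqP; rewrite gt_eqF.
  by move=> e; apply: (mulIf (lt0r_neq0 s_gt0)); rewrite -(divfK den (A * s)) e mulrC.
have e2 : A = 1 + G * (d / 2) by apply: lin; lra.
have e4 : A = 1 + G * (d / 4) by apply: lin; lra.
have G0 : G = 0 by nra.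
by rewrite e2 G0 mul0r addr0.
Qed.

End NearRight0.

Section Collinear.
Variable R : realType.
Implicit Types (x y a c w : pt R) (t : R).

Lemma dot_vsub_lt0 y a : on_S y -> in_H2 a -> dot y (vsub a y) < 0.
Proof.
move=> hy ha; have := dot_vsub_S_gt0 hy ha; move/eqP: hy => hy.
have -> : dot y (vsub a y) = (dot a a - dot y y - dot (vsub a y) (vsub a y)) / 2.
  by rewrite /dot /vsub /=; field.
by rewrite hy; move: ha; rewrite /in_H2 => ha hd; rewrite pmulr_llt0 ?invr_gt0 //; lra.
Qed.

Lemma orient_swap y a c : orient y c a = - orient y a c.
Proof. by rewrite /orient; ring. Qed.

Lemma orient_scale y a c : orient y a c = 0 ->
  vscale (dot y (vsub a y)) (vsub c y) = vscale (dot y (vsub c y)) (vsub a y).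
Proof.
move=> h; rewrite /vscale /vsub /dot /=; congr (_, _).
  by rewrite -[LHS]addr0 -(mulr0 y.2) -h /orient; ring.
by rewrite -[LHS]subr0 -(mulr0 y.1) -h /orient; ring.
Qed.

Lemma orient_collinear y a c w : orient y a c = 0 ->
  dot y (vsub a y) * orient y c w = dot y (vsub c y) * orient y a w.
Proof.
move=> /orient_scale [e1 e2]; rewrite /orient.
transitivity ((dot y (vsub a y) * (c.1 - y.1)) * (w.2 - y.2) -
  (dot y (vsub a y) * (c.2 - y.2)) * (w.1 - y.1)); first by ring.
by rewrite e1 e2 /vsub /=; ring.
Qed.

Lemma collinear_eq y a c : on_S y -> in_H2 a -> orient y a c = 0 ->
  dot y a = dot y c -> a = c.
Proof.
move=> hy ha h hk; have := orient_scale h.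
have -> : dot y (vsub c y) = dot y (vsub a y) by rewrite /dot /vsub /= in hk *; lra.
have hn := ltr0_neq0 (dot_vsub_lt0 hy ha).
case=> /(mulfI hn) e1 /(mulfI hn) e2.
rewrite [a]surjective_pairing [c]surjective_pairing; congr (_, _).
  by move: e1 => /addIr.
by move: e2 => /addIr.
Qed.

Lemma chord_otherZ x a c m : m != 0 -> dot (vsub a x) (vsub a x) != 0 ->
  vsub c x = vscale m (vsub a x) -> chord_other x c = chord_other x a.
Proof.
move=> hm hd hc.
have hmd : dot (vscale m (vsub a x)) (vscale m (vsub a x)) != 0.
  have -> : dot (vscale m (vsub a x)) (vscale m (vsub a x)) =
      m ^+ 2 * dot (vsub a x) (vsub a x) by rewrite /dot /vscale /=; ring.
  by rewrite mulf_neq0 ?expf_neq0.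
rewrite /chord_other hc; move: hd hmd; rewrite /vscale /vsub /dot /= => hd hmd.
by congr (_, _); field; rewrite hd hmd.
Qed.

Lemma chord_other_collinear x a c : on_S x -> in_H2 a -> in_H2 c -> orient x a c = 0 ->
  chord_other x a = chord_other x c.
Proof.
move=> hx ha hc h; symmetry.
have hA := ltr0_neq0 (dot_vsub_lt0 hx ha); have hC := ltr0_neq0 (dot_vsub_lt0 hx hc).
apply: (chord_otherZ (m := dot x (vsub c x) / dot x (vsub a x))).
- by rewrite mulf_neq0 ?invr_eq0.
- exact: lt0r_neq0 (dot_vsub_S_gt0 hx ha).
have [e1 e2] := orient_scale h.
rewrite /vscale; congr (_, _); apply: (mulfI hA).
  by rewrite e1 /vsub /=; field.
by rewrite e2 /vsub /=; field.
Qed.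

Lemma orient_chart y a c t : (1 + t ^+ 2) * orient (chart y t) a c =
  orient y a c + 2 * dot y (vsub c a) * t + (cross a c - cross y (vsub a c)) * t ^+ 2.
Proof.
have h := lt0r_neq0 (sqrD1_gt0 t).
by rewrite /orient /chart /cmul /cayley /dot /vsub /cross /=; field.
Qed.

Lemma stretch_gt0 a y : on_S y -> in_H2 a -> 0 < stretch a y.
Proof. by move=> hy ha; rewrite divr_gt0 ?dot_vsub_S_gt0 // subr_gt0. Qed.

Lemma stretch_collinear y a c : on_S y -> in_H2 a -> in_H2 c -> orient y a c = 0 ->
  exists2 k, 0 < k & stretch c y - stretch a y = k * (dot y c - dot y a).
Proof.
move=> hy ha hc h; have [e1 e2] := orient_scale h.
have hA := dot_vsub_lt0 hy ha; have hC := dot_vsub_lt0 hy hc.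
have hD := dot_vsub_S_gt0 hy ha; have hE := dot_vsub_S_gt0 hy hc.
set A := dot y (vsub a y) in e1 e2 hA *; set C := dot y (vsub c y) in e1 e2 hC *.
set D := dot (vsub a y) (vsub a y) in hD *; set E := dot (vsub c y) (vsub c y) in hE *.
set de := dot (vsub a y) (vsub c y).
have k1 : A * E = C * de.
  transitivity ((A * (vsub c y).1) * (vsub c y).1 + (A * (vsub c y).2) * (vsub c y).2).
    by rewrite /E /dot /vsub /=; ring.
  by rewrite e1 e2 /de /dot /vsub /=; ring.
have k2 : A * de = C * D.
  transitivity ((A * (vsub c y).1) * (vsub a y).1 + (A * (vsub c y).2) * (vsub a y).2).
    by rewrite /de /dot /vsub /=; ring.
  by rewrite e1 e2 /D /dot /vsub /=; ring.
have hde : 0 < de by rewrite -(nmulr_rlt0 _ hC) -k1 nmulr_rlt0.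
move/eqP: hy => hy.
have na : 1 - dot a a = - 2 * A - D by rewrite /A /D -[in LHS]hy /dot /vsub /=; ring.
have nc : 1 - dot c c = - 2 * C - E by rewrite /C /E -[in LHS]hy /dot /vsub /=; ring.
exists (2 * de / (D * E)); first by rewrite divr_gt0 ?mulr_gt0.
have -> : dot y c - dot y a = C - A by rewrite /C /A /dot /vsub /=; ring.
rewrite /stretch -/D -/E na nc.
apply: (mulIf (lt0r_neq0 hD)); apply: (mulIf (lt0r_neq0 hE)).
transitivity (2 * (A * E) - 2 * (C * D)); first by field; rewrite !lt0r_neq0.
by rewrite k1 -k2; field; rewrite !lt0r_neq0.
Qed.

Lemma exists_ray_exit a d : in_H2 a -> 0 < dot d d ->
  exists2 t, 0 < t & on_S (a.1 + t * d.1, a.2 + t * d.2).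
Proof.
move=> ha hA; set A := dot d d; set B := dot a d; set C := dot a a - 1.
have hC : C < 0 by rewrite subr_lt0.
set D := B ^+ 2 - A * C.
have hD : B ^+ 2 < D.
  have : 0 < - (A * C) by rewrite oppr_gt0 pmulr_rlt0.
  by rewrite /D; lra.
have hBr : B < Num.sqrt D.
  apply: le_lt_trans (ler_norm B) _.
  by rewrite -sqrtr_sqr ltr_sqrt // (le_lt_trans _ hD) // sqr_ge0.
exists ((- B + Num.sqrt D) / A); first by rewrite divr_gt0 // addrC subr_gt0.
apply/eqP; have hD0 : 0 <= D := le_trans (sqr_ge0 B) (ltW hD).
transitivity (A * ((- B + Num.sqrt D) / A) ^+ 2 + 2 * B * ((- B + Num.sqrt D) / A) + C + 1).
  by rewrite /A /B /C /dot /=; ring.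
have hA0 : A != 0 by rewrite lt0r_neq0.
rewrite -[RHS]add0r; congr (_ + 1).
have -> : A * ((- B + Num.sqrt D) / A) ^+ 2 + 2 * B * ((- B + Num.sqrt D) / A) + C =
  (Num.sqrt D ^+ 2 - D) / A by rewrite /D; field.
by rewrite sqr_sqrtr // subrr mul0r.
Qed.

End Collinear.

Section Polygon.
Variables (R : realType) (n : nat) (v : 'I_n -> pt R) (i0 : 'I_n).
Hypothesis vH : forall i, in_H2 (v i).
Implicit Types (x y p : pt R) (i j k : 'I_n) (b : bool).

Lemma supports_orient0 y i j : supports v y i -> supports v y j -> orient y (v i) (v j) = 0.
Proof.
move=> /forallP /(_ j) hi /forallP /(_ i) hj.
rewrite orient_swap in hj.
by apply/eqP; rewrite eq_le hi -oppr_ge0 hj.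
Qed.

Lemma supports_collinear y i j : on_S y -> supports v y i -> orient y (v i) (v j) = 0 ->
  supports v y j.
Proof.
move=> hy hi hij; apply/forallP => k; have := orient_collinear (v k) hij.
have hA := dot_vsub_lt0 hy (vH i); have hC := dot_vsub_lt0 hy (vH j).
have hk : 0 <= orient y (v i) (v k) by move/forallP: hi.
move=> e; have : dot y (vsub (v i) y) * orient y (v j) (v k) <= 0 by rewrite e nmulr_rle0.
by rewrite nmulr_rle0.
Qed.

Lemma tau_supports y i : on_S y -> supports v y i -> tau v y = chord_other y (v i).
Proof.
move=> hy hi; rewrite /tau; case: pickP => [k hk|none]; last by rewrite none in hi.
by apply: chord_other_collinear => //; apply: supports_orient0.
Qed.

Lemma on_S_tau y : on_S y -> on_S (tau v y).
Proof. by move=> hy; rewrite /tau; case: pickP => // k _; apply: chord_other_on_S. Qed.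

Lemma on_S_iter_tau m y : on_S y -> on_S (iter m (tau v) y).
Proof. by move=> hy; elim: m => //= m ih; apply: on_S_tau. Qed.

(* The witness maximises the slope [cross y (a - y) / - dot y (a - y)] of [a - y] as seen
   from [y]. *)
Lemma exists_supports y : on_S y -> exists i, supports v y i.
Proof.
move=> /eqP hy.
pose X k := - dot y (vsub (v k) y); pose Z k := cross y (vsub (v k) y).
have X_gt0 k : 0 < X k by rewrite oppr_gt0 dot_vsub_lt0 ?vH //; apply/eqP.
have [i _ hi] := @arg_maxP _ _ _ i0 xpredT (fun k => Z k / X k) isT.
exists i; apply/forallP => j.
have -> : orient y (v i) (v j) = Z i * X j - X i * Z j.
  rewrite -[LHS]mulr1 -hy /orient /Z /X /cross /dot /vsub /=; ring.
have /= := hi j isT; rewrite subr_ge0 ler_pdivrMr // mulrAC ler_pdivlMr //.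
by rewrite [X i * _]mulrC.
Qed.

(* On a supporting geodesic through [y], [dot y (v i)] increases towards [y], so [b = true]
   picks the supporting vertex nearest to [y]. The default [i0] is never used on S
   (exists_supports). *)
Definition support_vertex b y : 'I_n :=
  if [pick i | supports v y i] is Some j then
    if b then Order.arg_max j (supports v y) (fun i => dot y (v i))
    else Order.arg_min j (supports v y) (fun i => dot y (v i))
  else i0.

Lemma support_vertexP b y : on_S y ->
  supports v y (support_vertex b y) /\
  forall j, supports v y j ->
    (-1) ^+ b * dot y (v (support_vertex b y)) <= (-1) ^+ b * dot y (v j).
Proof.
move=> hy; rewrite /support_vertex; case: pickP => [j hj|none]; last first.
  by have [i hi] := exists_supports hy; rewrite none in hi.
case: b; [case: arg_maxP => // i hi H | case: arg_minP => // i hi H].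
  by split=> // k hk; rewrite expr1 !mulN1r lerN2; apply: H.
by split=> // k hk; rewrite expr0 !mul1r; apply: H.
Qed.

Lemma near_chart_orient_gt0 b y a c :
    0 < orient y a c \/ (orient y a c = 0 /\ 0 < (-1) ^+ b * dot y (vsub c a)) ->
  \forall s \near 0^'+, 0 < orient (chart y ((-1) ^+ b * s)) a c.
Proof.
move=> h; near=> s.
rewrite -(pmulr_rgt0 _ (sqrD1_gt0 ((-1) ^+ b * s))) orient_chart.
set e := (-1) ^+ b; set q := cross a c - cross y (vsub a c).
have -> : orient y a c + 2 * dot y (vsub c a) * (e * s) + q * (e * s) ^+ 2 =
    orient y a c + 2 * (e * dot y (vsub c a)) * s + q * s ^+ 2.
  by rewrite exprMn sqrr_sign; ring.
near: s; apply: near_right0_poly_gt0.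
case: h => [|[-> h]]; [by left | right; split=> //].
by rewrite mulr_gt0.
Unshelve. all: by end_near. Qed.

Lemma near_supports_chart b y : on_S y ->
  \forall s \near 0^'+, supports v (chart y ((-1) ^+ b * s)) (support_vertex b y).
Proof.
move=> hy; have [hs hmin] := support_vertexP b hy; set a := support_vertex b y in hs hmin *.
suff H : \forall s \near 0^'+, forall j, 0 <= orient (chart y ((-1) ^+ b * s)) (v a) (v j).
  by near=> s; apply/forallP; near: s.
apply: filter_forall => j.
have : 0 <= orient y (v a) (v j) by move/forallP: hs.
rewrite le_eqVlt => /orP[/eqP/esym h0|h0]; last first.
  by near=> s; apply: ltW; near: s; exact: near_chart_orient_gt0 (or_introl h0).
have hkey := hmin j (supports_collinear hy hs h0).
have [e|ne] := eqVneq (dot y (v a)) (dot y (v j)).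
  rewrite -(collinear_eq hy (vH a) h0 e).
  by near=> s; rewrite /orient mulrC subrr.
near=> s; apply: ltW; near: s; apply: near_chart_orient_gt0; right; split=> //.
rewrite (_ : dot y _ = dot y (v j) - dot y (v a)); last by rewrite /dot /vsub /=; ring.
rewrite mulrBr subr_gt0 lt_def hkey andbT.
by apply: contra ne => /eqP/(mulfI (negbT (signr_eq0 _ _))) ->.
Unshelve. all: by end_near. Qed.

Lemma tau_support_vertex b y : on_S y -> tau v y = chord_other y (v (support_vertex b y)).
Proof. by move=> hy; apply: tau_supports => //; case: (support_vertexP b hy). Qed.

Lemma near_tau_chart b y : on_S y ->
  \forall s \near 0^'+, tau v (chart y ((-1) ^+ b * s)) =
    chord_other (chart y ((-1) ^+ b * s)) (v (support_vertex b y)).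
Proof.
move=> hy; near=> s; apply: tau_supports; first exact: on_S_chart.
by near: s; exact: near_supports_chart.
Unshelve. all: by end_near. Qed.

Lemma stretch_support_vertex_le y : on_S y ->
  stretch (v (support_vertex false y)) y <= stretch (v (support_vertex true y)) y.
Proof.
move=> hy; have [hf minf] := support_vertexP false hy; have [ht _] := support_vertexP true hy.
have [k k_gt0 E] := stretch_collinear hy (vH _) (vH _) (supports_orient0 hf ht).
have := minf _ ht; rewrite expr0 !mul1r => key_le.
by rewrite -subr_ge0 E pmulr_rge0 // subr_ge0.
Qed.

Lemma stretch_support_vertex_lt y i j : on_S y -> supports v y i -> supports v y j ->
  dot y (v j) < dot y (v i) ->
  stretch (v (support_vertex false y)) y < stretch (v (support_vertex true y)) y.
Proof.
move=> hy hi hj hji.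
have [hf minf] := support_vertexP false hy; have [ht maxt] := support_vertexP true hy.
have [k k_gt0 E] := stretch_collinear hy (vH _) (vH _) (supports_orient0 hf ht).
have := minf _ hj; have := maxt _ hi; rewrite expr0 expr1 !mul1r !mulN1r lerN2 => hit hfj.
by rewrite -subr_gt0 E pmulr_rgt0 // subr_gt0 (le_lt_trans hfj (lt_le_trans hji hit)).
Qed.

Definition orbit_stretch b p m : R :=
  \prod_(j < m) stretch (v (support_vertex b (iter j (tau v) p))) (iter j (tau v) p).

Lemma orbit_stretch_gt0 b p m : on_S p -> 0 < orbit_stretch b p m.
Proof.
by move=> hp; apply: prodr_gt0 => j _; apply: stretch_gt0; [exact: on_S_iter_tau | exact: vH].
Qed.

Lemma iter_tau_chart b p m : on_S p -> exists G, \forall s \near 0^'+,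
  0 < 1 + G * s /\
  iter m (tau v) (chart p ((-1) ^+ b * s)) =
    chart (iter m (tau v) p) ((-1) ^+ b * mobius (orbit_stretch b p m) G s).
Proof.
move=> hp; elim: m => [|m [G IH]].
  exists 0; near=> s; rewrite mul0r addr0 ltr01; split=> //.
  by rewrite /orbit_stretch big_ord0 /mobius mul0r addr0 divr1 mul1r.
set y := iter m (tau v) p; have hy : on_S y := on_S_iter_tau m hp.
set a := v (support_vertex b y); set e : R := (-1) ^+ b; set B := e * bend y a.
set M := orbit_stretch b p m; have M_gt0 : 0 < M := orbit_stretch_gt0 b m hp.
have step : \forall t \near 0^'+,
    0 < 1 + B * t /\ tau v (chart y (e * t)) = chord_other (chart y (e * t)) a.
  near=> t; split; last by near: t; exact: near_tau_chart.
  have : 0 < 1 + B * t + 0 * t ^+ 2.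
    by near: t; apply: near_right0_poly_gt0; left; exact: ltr01.
  by rewrite mul0r addr0.
have := near_right0_comp (fun _ e_gt0 => near_right0_mobius G M_gt0 e_gt0) step.
move/(filterI IH) => H; exists (G + B * M).
apply: (filterS _ H) => s /= [[hG E] [hB T]].
set f := mobius M G s in E hB T.
have hGB := mobius_den_comp M B (lt0r_neq0 hG); rewrite -/f in hGB.
split; first by rewrite -hGB mulr_gt0.
have -> : orbit_stretch b p m.+1 = M * stretch a y by rewrite /M /orbit_stretch big_ord_recr.
rewrite E -/y T chord_other_chart ?vH //; last by rewrite mulrA [_ * e]mulrC lt0r_neq0.
rewrite mobius_signr mobius_comp ?lt0r_neq0 // (tau_support_vertex b hy).
by rewrite -/e -/B [stretch a y * M]mulrC.
Unshelve. all: by end_near. Qed.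

Lemma orbit_stretch_periodic b p N : on_S p ->
  (forall x, on_S x -> iter N (tau v) x = x) -> orbit_stretch b p N = 1.
Proof.
move=> hp hper; have [G H] := iter_tau_chart b N hp.
apply: (mobius_id (G := G)); apply: (filterS _ H) => s [_].
rewrite hper ?on_S_chart // hper // => /(chart_inj hp).
by move/(mulfI (negbT (signr_eq0 _ b)))/esym.
Qed.

Lemma orbit_stretch_lt p m : on_S p -> (0 < m)%N ->
    stretch (v (support_vertex false p)) p < stretch (v (support_vertex true p)) p ->
  orbit_stretch false p m < orbit_stretch true p m.
Proof.
case: m => // m hp _ h0; rewrite /orbit_stretch !big_ord_recl.
set F := \prod_(i < m) _; set T := \prod_(i < m) _.
have F_gt0 : 0 < F.
  by apply: prodr_gt0 => i _; apply: stretch_gt0; [exact: on_S_iter_tau | exact: vH].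
have FT : F <= T.
  apply: ler_prod => i _; set y := iter _ _ p.
  have hy : on_S y by apply: on_S_iter_tau.
  by rewrite ltW ?stretch_gt0 ?vH //= stretch_support_vertex_le.
apply: lt_le_trans (_ : stretch (v (support_vertex true p)) p * F <= _).
  by rewrite ltr_pM2r.
by rewrite ler_pM2l // stretch_gt0.
Qed.

(* The breakpoint is the ideal endpoint of the side [v i, v j] beyond [v i]. *)
Lemma exists_breakpoint i j : (forall k, 0 <= orient (v i) (v j) (v k)) -> v i != v j ->
  exists p, [/\ on_S p, supports v p i, supports v p j & dot p (v j) < dot p (v i)].
Proof.
move=> side ne; set d := vsub (v i) (v j).
have [t t_gt0 hp] := exists_ray_exit (vH i) (dot_vsub_gt0 ne).
set p := (_, _) in hp; exists p; split=> //.
- apply/forallP => k; rewrite (_ : orient p _ _ = t * orient (v i) (v j) (v k)).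
    exact: mulr_ge0 (ltW t_gt0) (side k).
  by rewrite /orient /p /d /vsub /=; ring.
- apply/forallP => k; rewrite (_ : orient p _ _ = (1 + t) * orient (v i) (v j) (v k)).
    by apply: mulr_ge0 (side k); rewrite addr_ge0 // ltW.
  by rewrite /orient /p /d /vsub /=; ring.
have := dot_vsub_lt0 hp (vH i).
rewrite (_ : dot p _ = - t * (dot p (v i) - dot p (v j))); last first.
  by rewrite /p /d /dot /vsub /=; ring.
by rewrite mulNr oppr_lt0 pmulr_rgt0 // subr_gt0.
Qed.

End Polygon.

Lemma convex_polygon_side (R : realType) (n : nat) (v : 'I_n -> pt R) :
  convex_polygon v -> exists i j, v i != v j /\ forall k, 0 <= orient (v i) (v j) (v k).
Proof.
move=> [n_ge3 [_ conv]]; have n_gt0 : (0 < n)%N by apply: leq_trans n_ge3.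
pose i : 'I_n := Ordinal n_gt0; pose j := ordS i; pose k := ordS j.
have vj : val j = 1%N by rewrite /= modn_small // (leq_trans _ n_ge3).
have vk : val k = 2%N by rewrite /= [X in X.+1]vj modn_small.
have ji : j != i by rewrite -val_eqE vj.
have ki : k != i by rewrite -val_eqE vk.
have kj : k != j by rewrite -val_eqE vk vj.
exists i, j; split.
  apply: contraTneq (conv i k ki kj) => e.
  by rewrite -/j e (_ : orient _ _ _ = 0) ?ltxx // /orient; ring.
move=> l; have [->|li] := eqVneq l i; first by rewrite (_ : orient _ _ _ = 0) // /orient; ring.
have [->|lj] := eqVneq l j; first by rewrite (_ : orient _ _ _ = 0) // /orient; ring.
exact: ltW (conv i l li lj).
Qed.

Theorem mainTheorem17 (R : realType) (n : nat) (v : 'I_n -> pt R) :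
  convex_polygon v ->
  ~ (exists N : nat, (1 <= N)%N /\
       (forall xi : pt R, on_S xi -> iter N (tau v) xi = xi)).
Proof.
move=> hP [N [N_gt0 periodic]].
have vH : forall k, in_H2 (v k) by case: hP => _ [].
have [i [j [ne side]]] := convex_polygon_side hP.
have [p [hp hi hj hji]] := exists_breakpoint vH side ne.
have := orbit_stretch_lt vH hp N_gt0 (stretch_support_vertex_lt i vH hp hi hj hji).
by rewrite !(orbit_stretch_periodic i vH _ hp periodic) ltxx.
Qed.
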